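(* Let $(I^*,\pi^* )\in\mathcal I_L\times\mathbb R$ be a Pareto optimal contract with $\rho^{Pol}(I^*,\pi^* )=\rho^{Pol}(0,0)$. Then there exists a pricing distortion function $g^*_{I^*}$ such that $(I^*,g^*_{I^*})$ is a Stackelberg equilibrium and $\Pi_{g^*_{I^*}}(I^*(X))=\pi^*$.
   Context: $(\Omega,\mathcal F,\mathbb P)$ is a non-atomic probability space; $X\ge0$ is bounded with range $[0,M]$ and strictly increasing distribution function $F_X$. A distortion function is a non-decreasing differentiable map $h:[0,1]\to[0,1]$ with $h(0)=0$, $h(1)=1$; $\int Y\,\mathrm dh\circ\mathbb P=\int_0^\infty h(\mathbb P(Y\ge y))\mathrm dy+\int_{-\infty}^0[h(\mathbb P(Y\ge y))-1]\mathrm dy$. Policyholder distortion $T$, $\rho^{Pol}(Z)=\int Z\,\mathrm dT\circ\mathbb P$; pricing distortion $g$, $\Pi_g(I(X))=\int I(X)\,\mathrm dg\circ\mathbb P$. $\mathcal I_L=\{I:[0,M]\to[0,M]: I(0)=0,\ 0\le I(x_1)-I(x_2)\le x_1-x_2\ \forall x_2\le x_1\}$; for a mechanism, $\rho^{Pol}(I,g)=\rho^{Pol}(X-I(X)+\Pi_g(I(X)))$ and $V^{In}(I,g)=\Pi_g(I(X))-\mathbb E[I(X)]$. $(I^*,g^* )$ is a Stackelberg equilibrium if (i) $I^*\in\arg\min_{I\in\mathcal I_L}\rho^{Pol}(I,g^* )$ and (ii) $V^{In}(I^*,g^* )\ge V^{In}(I,g)$ for all $(I,g)$ with $I\in\arg\min_{\bar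 I\in\mathcal I_L}\rho^{Pol}(\bar I,g)$. For a contract $(I,\pi)\in\mathcal I_L\times\mathbb R$: $\rho^{Pol}(I,\pi)=\rho^{Pol}(X-I(X)+\pi)$, $V^{In}(I,\pi)=\pi-\mathbb E[I(X)]$; it is Pareto optimal if no $(I',\pi')$ has $\rho^{Pol}(I',\pi')\le\rho^{Pol}(I,\pi)$ and $V^{In}(I',\pi')\ge V^{In}(I,\pi)$ with at least one strict inequality. *)

From HB Require Import structures.
From mathcomp Require Import all_boot all_order all_algebra.
From mathcomp Require Import all_classical all_reals all_analysis.
Set Implicit Arguments. Unset Strict Implicit. Unset Printing Implicit Defensive.
Import Order.TTheory GRing.Theory Num.Theory.
Import numFieldNormedType.Exports.
Local Open Scope classical_set_scope.
Local Open Scope ring_scope.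

Section Defs.
Context (R : realType) (d : measure_display) (T : measurableType d)
        (P : probability T R).

Definition nonatomic : Prop :=
  forall A : set T, measurable A -> (0 < P A)%E ->
    exists B : set T, [/\ measurable B, B `<=` A, (0 < P B)%E & (P B < P A)%E].

Definition distr_fun (X : T -> R) (x : R) : R := fine (P [set w | X w <= x]).

Definition differentiable01 (h : R -> R) : Prop :=
  forall x : R, 0 <= x <= 1 ->
    exists l : R,
      (fun y => (h y - h x) / (y - x)) @
        within (fun y : R => 0 <= y <= 1 /\ y != x) (nbhs x) --> l.

Definition distortion (h : R -> R) : Prop :=
  [/\ forall x, 0 <= x <= 1 -> 0 <= h x <= 1,
      forall x y, 0 <= x -> x <= y -> y <= 1 -> h x <= h y,
      differentiable01 h,
      h 0 = 0 & h 1 = 1].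

Definition choquet (h : R -> R) (Y : T -> R) : R :=
  fine (\int[lebesgue_measure]_(y in `[0, +oo[)
          (h (fine (P [set w | y <= Y w])))%:E)
  + fine (\int[lebesgue_measure]_(y in `]-oo, 0[)
          (h (fine (P [set w | y <= Y w])) - 1)%:E).

Definition expect (Y : T -> R) : R := fine (\int[P]_w (Y w)%:E).

Definition IL (M : R) (I : R -> R) : Prop :=
  [/\ I 0 = 0,
      forall x, 0 <= x <= M -> 0 <= I x <= M &
      forall x1 x2, 0 <= x2 -> x2 <= x1 -> x1 <= M ->
        0 <= I x1 - I x2 <= x1 - x2].

Definition rhoPol_mech (Tf : R -> R) (X : T -> R) (I g : R -> R) : R :=
  choquet Tf (fun w => X w - I (X w) + choquet g (fun w' => I (X w'))).

Definition VIn_mech (X : T -> R) (I g : R -> R) : R :=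
  choquet g (fun w => I (X w)) - expect (fun w => I (X w)).

Definition best_response (M : R) (Tf : R -> R) (X : T -> R) (g I : R -> R)
  : Prop :=
  IL M I /\ forall I', IL M I' -> rhoPol_mech Tf X I g <= rhoPol_mech Tf X I' g.

Definition stackelberg (M : R) (Tf : R -> R) (X : T -> R) (Is gs : R -> R)
  : Prop :=
  [/\ distortion gs,
      best_response M Tf X gs Is &
      forall I g, distortion g -> best_response M Tf X g I ->
        VIn_mech X I g <= VIn_mech X Is gs].

Definition rhoPol_ctr (Tf : R -> R) (X : T -> R) (I : R -> R) (pi : R) : R :=
  choquet Tf (fun w => X w - I (X w) + pi).

Definition VIn_ctr (X : T -> R) (I : R -> R) (pi : R) : R :=
  pi - expect (fun w => I (X w)).

Definition pareto_optimal (M : R) (Tf : R -> R) (X : T -> R)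
  (I : R -> R) (pi : R) : Prop :=
  IL M I /\
  ~ exists I' pi', [/\ IL M I',
      rhoPol_ctr Tf X I' pi' <= rhoPol_ctr Tf X I pi,
      VIn_ctr X I pi <= VIn_ctr X I' pi' &
      rhoPol_ctr Tf X I' pi' < rhoPol_ctr Tf X I pi \/
      VIn_ctr X I pi < VIn_ctr X I' pi'].

End Defs.

From HB Require Import structures.
From mathcomp Require Import all_boot all_order all_algebra.
From mathcomp Require Import all_classical all_reals all_analysis.
From mathcomp Require Import measurable_realfun lra ring.
Import Order.TTheory GRing.Theory Num.Theory.
Import numFieldNormedType.Exports.
Set Implicit Arguments. Unset Strict Implicit. Unset Printing Implicit Defensive.
Local Open Scope classical_set_scope.
Local Open Scope ring_scope.

(* Price with the policyholder's own distortion, g = Tf.  For I in I_L the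
   retention X - I(X) and the indemnity I(X) are comonotone, and the Choquet
   integral is additive on comonotone pairs, so rho_Tf(X - I(X) + Pi_Tf(I(X)))
   = rho_Tf(X) for every I: the policyholder is indifferent between all
   indemnities, and Is at price pis = Pi_Tf(Is(X)) is a best response.  If a
   mechanism (I, g) with best response I gave the insurer more, then since I
   is weakly preferred to no insurance under g, the contract (I, Pi_g(I(X)))
   would Pareto-dominate (Is, pis).

   Comonotone additivity for f1(X), f2(X) with f1 + f2 1-Lipschitz is proved
   by writing the Choquet integral of f(X) as the Lebesgue integral of the
   distorted tail over ]-K, f(M)]: on a step [z, z'] of a uniform partition of
   [0, M] the increment of that integral is squeezed between the distorted
   tails of X at z' and z times f(z') - f(z), so the additivity defect
   changes by at most (variation of the tail of X) * (mesh), which telescopes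
   to zero. *)

Section DistortedTail.
Context (R : realType) (d : measure_display) (T : measurableType d)
  (P : probability T R).
Local Notation mu := (@lebesgue_measure R).

Definition distorted_tail (h : R -> R) (Y : T -> R) (y : R) : R :=
  h (fine (P [set w | y <= Y w])).

Lemma fine_probability01 A : measurable A -> 0 <= fine (P A) <= 1.
Proof.
move=> mA; have PA1 := probability_le1 P mA.
have PAfin : P A \is a fin_num by rewrite ge0_fin_numE ?(le_lt_trans PA1) ?ltry.
by rewrite -!lee_fin fineK // measure_ge0 PA1.
Qed.

Lemma le_fine_probability A B : measurable A -> measurable B -> A `<=` B ->
  fine (P A) <= fine (P B).
Proof.
move=> mA mB AB; rewrite -lee_fin !fineK ?ge0_fin_numE ?measure_ge0 //.
- exact: le_measure (mem_set mA) (mem_set mB) AB.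
- exact: le_lt_trans (probability_le1 P mB) (ltry _).
- exact: le_lt_trans (probability_le1 P mA) (ltry _).
Qed.

Section Distortion.
Variable h : R -> R.
Hypothesis hd : distortion h.

Lemma distorted_tail01 Y y : measurable [set w | y <= Y w] ->
  0 <= distorted_tail h Y y <= 1.
Proof. by case: hd => h01 _ _ _ _ mY; apply/h01/fine_probability01. Qed.

Lemma le_distorted_tail Y1 Y2 y1 y2 :
  measurable [set w | y1 <= Y1 w] -> measurable [set w | y2 <= Y2 w] ->
  [set w | y1 <= Y1 w] `<=` [set w | y2 <= Y2 w] ->
  distorted_tail h Y1 y1 <= distorted_tail h Y2 y2.
Proof.
case: hd => _ hle _ _ _ m1 m2 sub.
have /andP[? _] := fine_probability01 m1; have /andP[_ ?] := fine_probability01 m2.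
by apply: hle => //; exact: le_fine_probability.
Qed.

Variable Y : T -> R.
Hypothesis mY : forall y, measurable [set w | y <= Y w].

Lemma distorted_tail_nonincreasing : nonincreasing_fun (distorted_tail h Y).
Proof. by move=> y1 y2 y12; apply: le_distorted_tail => // w /=; apply: le_trans. Qed.

Lemma distorted_tail_integrable A : measurable A -> (mu A < +oo)%E ->
  mu.-integrable A (EFin \o distorted_tail h Y).
Proof.
move=> mA Afin; apply: measurable_bounded_integrable => //.
  exact: nonincreasing_measurable distorted_tail_nonincreasing.
exists 1; split; first exact: num_real.
move=> c c1 y _; have /andP[t0 t1] := distorted_tail01 (mY y).
by rewrite /= ger0_norm // (le_trans t1) // ltW.
Qed.

Lemma distorted_tail_eq0 y : (forall w, Y w < y) -> distorted_tail h Y y = 0.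
Proof.
case: hd => _ _ _ h0 _ Yy; rewrite /distorted_tail.
suff -> : [set w | y <= Y w] = set0 by rewrite measure0 h0.
by apply/seteqP; split => // w /=; rewrite leNgt Yy.
Qed.

Lemma distorted_tail_eq1 y : (forall w, y <= Y w) -> distorted_tail h Y y = 1.
Proof.
case: hd => _ _ _ _ h1 Yy; rewrite /distorted_tail.
suff -> : [set w | y <= Y w] = setT by rewrite probability_setT h1.
by apply/seteqP; split => // w _; apply: Yy.
Qed.

End Distortion.
End DistortedTail.

Section ChoquetBounded.
Context (R : realType) (d : measure_display) (T : measurableType d)
  (P : probability T R).
Local Notation mu := (@lebesgue_measure R).
Local Notation tail := (distorted_tail P).

Lemma lebesgue_measure_itv_lty (b0 b1 : bool) (a b : R) :
  (mu [set` Interval (BSide b0 a) (BSide b1 b)] < +oo)%E.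
Proof. by rewrite lebesgue_measure_itv; case: ifP => _; rewrite ?ltry // -EFinD ltry. Qed.

Lemma fine_lebesgue_measure_itv (b0 b1 : bool) (a b : R) : a <= b ->
  fine (mu [set` Interval (BSide b0 a) (BSide b1 b)]) = b - a.
Proof.
move=> ab; rewrite lebesgue_measure_itv /=.
case: b0; case: b1 => /=; (case: ifPn => [_ //|]; rewrite lte_fin -leNgt => ba;
  have -> : b = a by apply/le_anti/andP); by rewrite subrr.
Qed.

Lemma Rintegral_itv_cst (b0 b1 : bool) (a b c : R) : a <= b ->
  Rintegral mu [set` Interval (BSide b0 a) (BSide b1 b)] (fun=> c) = c * (b - a).
Proof.
move=> ab; rewrite Rintegral_cst; last exact: measurable_itv.
by rewrite fine_lebesgue_measure_itv.
Qed.

Lemma lebesgue_integrable_itv_cst (b0 b1 : bool) (a b c : R) :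
  mu.-integrable [set` Interval (BSide b0 a) (BSide b1 b)] (EFin \o fun=> c).
Proof.
apply: (@measurable_bounded_integrable _ _ _ mu (fun=> c) _ (measurable_itv _)).
- exact: lebesgue_measure_itv_lty.
- exact: measurable_cst.
- exact: bounded_cst.
Qed.

Section Distortion.
Variable h : R -> R.
Hypothesis hd : distortion h.
Variable Y : T -> R.
Hypothesis mY : forall y, measurable [set w | y <= Y w].

Lemma distorted_tail_integrable_itv (b0 b1 : bool) (a b : R) :
  mu.-integrable [set` Interval (BSide b0 a) (BSide b1 b)] (EFin \o tail h Y).
Proof.
exact: distorted_tail_integrable (measurable_itv _) (lebesgue_measure_itv_lty _ _ _ _).
Qed.

Lemma Rintegral_distorted_tail_bounds u v c1 c2 : u <= v ->
  (forall y, u < y -> y <= v -> c1 <= tail h Y y <= c2) ->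
  c1 * (v - u) <= Rintegral mu `]u, v] (tail h Y) <= c2 * (v - u).
Proof.
move=> uv c12; have cst_int c := @lebesgue_integrable_itv_cst false false u v c.
rewrite -!(@Rintegral_itv_cst false false) //; apply/andP; split;
  apply: le_Rintegral; rewrite ?distorted_tail_integrable_itv //;
  try exact: measurable_itv;
  by move=> y; rewrite /= in_itv /= => /andP[uy yv]; case/andP: (c12 y uy yv).
Qed.

Lemma Rintegral_distorted_tail_cst u v c : u <= v ->
  (forall y, u < y -> y <= v -> tail h Y y = c) ->
  Rintegral mu `]u, v] (tail h Y) = c * (v - u).
Proof.
move=> uv tc; apply/le_anti; rewrite andbC.
apply: Rintegral_distorted_tail_bounds => // y uy yv.
by rewrite tc ?lexx.
Qed.

Lemma Rintegral_distorted_tail_nonneg K : (forall w, Y w <= K) ->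
  Rintegral mu `[0, +oo[ (tail h Y) = Rintegral mu `]0, K] (tail h Y).
Proof.
move=> YK; rewrite Rintegral_itv_obnd_cbnd; last first.
  exact: (@distorted_tail_integrable_itv false false).
have -> : `[0, K]%classic = `[0, +oo[ `&` `[0, K] :> set R.
  by apply/seteqP; split => y /=; rewrite !in_itv /= ?andbT;
    [move=> yK; split => //; case/andP: yK|case].
rewrite Rintegral_mkcondr; apply: eq_Rintegral => y; rewrite inE /= in_itv /= andbT.
rewrite /restrict mem_setE /= in_itv /= => ->; case: ifPn => //; rewrite -ltNge => Ky.
by apply: distorted_tail_eq0 => // w; apply: le_lt_trans Ky.
Qed.

Lemma Rintegral_distorted_tail_neg K : 0 <= K -> (forall w, -K <= Y w) ->
  Rintegral mu `]-oo, 0[ (fun y => tail h Y y - 1) =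
  Rintegral mu `]-K, 0] (tail h Y) - K.
Proof.
move=> K0 YK.
have -> : Rintegral mu `]-oo, 0[ (fun y => tail h Y y - 1) =
          Rintegral mu (`]-oo, 0[ `&` `]-K, 0[) (fun y => tail h Y y - 1).
  rewrite Rintegral_mkcondr; apply: eq_Rintegral => y; rewrite inE /= in_itv /= => y0.
  rewrite /restrict mem_setE /= in_itv /= y0 andbT; case: ifPn => //; rewrite -leNgt => yK.
  by rewrite distorted_tail_eq1 ?subrr // => w; apply: le_trans (YK w).
have -> : `]-oo, 0[ `&` `]-K, 0[ = `]-K, 0[%classic :> set R.
  by apply/seteqP; split => y /=; rewrite !in_itv /= ?andbT;
    [case|move=> yK; split => //; case/andP: yK].
rewrite RintegralB; first last.
- exact: (@lebesgue_integrable_itv_cst false true).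
- exact: (@distorted_tail_integrable_itv false true).
- exact: measurable_itv.
rewrite Rintegral_itv_bndo_bndc; last exact: (@distorted_tail_integrable_itv false true).
by rewrite (@Rintegral_itv_cst false true) ?oppr_le0 // sub0r opprK mul1r.
Qed.

Lemma choquet_bounded K : 0 <= K -> (forall w, -K <= Y w <= K) ->
  choquet P h Y = Rintegral mu `]-K, K] (tail h Y) - K.
Proof.
move=> K0 YK.
have -> : choquet P h Y = Rintegral mu `[0, +oo[ (tail h Y) +
    Rintegral mu `]-oo, 0[ (fun y => tail h Y y - 1) by [].
rewrite (@Rintegral_distorted_tail_nonneg K) => [|w]; last by case/andP: (YK w).
rewrite (@Rintegral_distorted_tail_neg K) // => [|w]; last by case/andP: (YK w).
rewrite addrA -(@Rintegral_itvB _ _ (BRight (-K)) (BRight K) 0) ?subrK //.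
- exact: (@distorted_tail_integrable_itv false false).
- by rewrite bnd_simp oppr_le0.
Qed.

End Distortion.

Lemma choquet_cst h c : distortion h -> choquet P h (fun=> c) = c.
Proof.
move=> hd; have mc y : measurable [set _ : T | y <= c].
  have := (measurable_cst c : measurable_fun [set: T] (cst c)) measurableT _
    (measurable_itv `[y, +oo[).
  by rewrite setTI; congr measurable; apply/seteqP; split => w /=; rewrite in_itv /= andbT.
rewrite (choquet_bounded hd mc (K := `|c|)) // => [|w]; last by rewrite -ler_norml.
have /andP[cl cr] : - `|c| <= c <= `|c| by rewrite -ler_norml.
have := Rintegral_itvB (x := c) (distorted_tail_integrable_itv hd mc false false (- `|c|) `|c|).
rewrite !bnd_simp => /(_ cl cr).
rewrite (Rintegral_distorted_tail_cst hd mc cl (c := 1)) => [|y _ yc]; last first.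
  exact: (distorted_tail_eq1 P hd).
rewrite (Rintegral_distorted_tail_cst hd mc cr (c := 0)) => [|y cy _]; last first.
  by apply: (distorted_tail_eq0 P hd).
by rewrite mul1r mul0r opprK => /eqP; rewrite subr_eq add0r => /eqP ->; rewrite addrK.
Qed.

End ChoquetBounded.

Section SmallIncrements.
Variable R : archiRealFieldType.

Lemma le_div_natr_eq0 (e c : R) : 0 <= e ->
  (forall n : nat, (0 < n)%N -> e <= c / n%:R) -> e = 0.
Proof.
move=> e0 ec; apply/eqP; rewrite eq_le e0 andbT leNgt; apply/negP => e_gt0.
set n := (Num.bound (`|c| / e)).+1.
have n_gt0 : (0 : R) < n%:R by rewrite ltr0n.
have ce : `|c| / e < n%:R.
  apply: lt_le_trans (archi_boundP _) _; first by rewrite divr_ge0.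
  by rewrite ler_nat.
have : e <= `|c| / n%:R.
  by apply: le_trans (ec n isT) _; rewrite ler_wpM2r ?invr_ge0 ?ler_norm // ltW.
rewrite ler_pdivlMr //; move: ce; rewrite ltr_pdivrMr //; nra.
Qed.

Lemma small_increments_endpoints_eq (E S : R -> R) (M : R) : 0 <= M ->
  (forall z z', 0 <= z -> z <= z' -> z' <= M ->
     `|E z' - E z| <= (S z - S z') * (z' - z)) ->
  E M = E 0.
Proof.
move=> M0 incr; apply/eqP; rewrite -subr_eq0 -normr_eq0; apply/eqP.
apply: (@le_div_natr_eq0 _ ((S 0 - S M) * M)) => // n n_gt0.
have nR_gt0 : (0 : R) < n%:R by rewrite ltr0n.
pose st := M / n%:R.
have st0 : 0 <= st by rewrite divr_ge0 // ler0n.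
have telescope k : (k <= n)%N ->
    `|E (k%:R * st) - E 0| <= (S 0 - S (k%:R * st)) * st.
  elim: k => [|k IH] kn; first by rewrite mul0r !subrr normr0 mul0r.
  have z0 : 0 <= k%:R * st by rewrite mulr_ge0 // ler0n.
  have zz : k%:R * st <= k.+1%:R * st by rewrite ler_wpM2r // ler_nat.
  have z'M : k.+1%:R * st <= M.
    by rewrite /st mulrA ler_pdivrMr // mulrC ler_wpM2l // ler_nat.
  have := incr _ _ z0 zz z'M.
  rewrite -mulrBl -natrB // subSnn mul1r => step.
  have -> : E (k.+1%:R * st) - E 0 =
      (E (k.+1%:R * st) - E (k%:R * st)) + (E (k%:R * st) - E 0) by ring.
  have := ler_normD (E (k.+1%:R * st) - E (k%:R * st)) (E (k%:R * st) - E 0).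
  have := IH (ltnW kn); nra.
have nst : n%:R * st = M by rewrite /st mulrC divfK ?gt_eqF.
by have := telescope n (leqnn n); rewrite nst /st mulrA.
Qed.
End SmallIncrements.

Section ComonotoneAdditivity.
Context (R : realType) (d : measure_display) (T : measurableType d)
  (P : probability T R) (X : T -> R) (M : R).
Hypotheses (mX : measurable_fun setT X) (M0 : 0 <= M)
  (XM : forall w, 0 <= X w <= M).
Local Notation mu := (@lebesgue_measure R).
Local Notation tail := (distorted_tail P).

Definition nondecreasing_on_0M (f : R -> R) : Prop :=
  forall x y, 0 <= x -> x <= y -> y <= M -> f x <= f y.

Lemma measurable_superlevel_comp f : nondecreasing_on_0M f ->
  forall y, measurable [set w | y <= f (X w)].
Proof.
(* f is only monotone on [0, M]; f \o clamp is globally nondecreasing and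
   agrees with f on the range of X. *)
move=> fnd y; pose clamp x := if x < 0 then 0 else if x <= M then x else M.
have clamp_id x : 0 <= x -> x <= M -> clamp x = x.
  by move=> x0 xM; rewrite /clamp ltNge x0 /= xM.
have clamp_in x : 0 <= clamp x <= M.
  by rewrite /clamp; case: (ltP x 0) => x0; case: (leP x M) => xM;
    apply/andP; split => //; lra.
have fclamp_nd : nondecreasing_fun (f \o clamp).
  move=> a b ab; have /andP[? ?] := clamp_in a; have /andP[? ?] := clamp_in b.
  apply: fnd => //; rewrite /clamp.
  by case: (ltP a 0) => a0; case: (ltP b 0) => b0;
    case: (leP a M) => aM; case: (leP b M) => bM; lra.
have := measurableT_comp (nondecreasing_measurable measurableT fclamp_nd) mX.
move=> /(_ measurableT _ (measurable_itv `[y, +oo[)); congr measurable.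
apply/seteqP; split => w /=; have /andP[w0 wM] := XM w.
  by case=> _; rewrite in_itv /= andbT clamp_id.
by move=> yw; split => //; rewrite in_itv /= andbT clamp_id.
Qed.

Lemma nondecreasing_on_0M_norm_le f x : nondecreasing_on_0M f ->
  0 <= x -> x <= M -> `|f x| <= `|f 0| + `|f M|.
Proof.
move=> fnd x0 xM; have := fnd 0 x (lexx _) x0 xM; have := fnd x M x0 xM (lexx _).
have := ler_norm (f M); have := normr_ge0 (f 0); have := normr_ge0 (f M).
have : - `|f 0| <= f 0 by rewrite lerNl -normrN ler_norm.
by rewrite ler_norml => *; apply/andP; split; lra.
Qed.

Section Distortion.
Variable h : R -> R.
Hypothesis hd : distortion h.

Definition tail_integral (f : R -> R) (K z : R) : R :=
  Rintegral mu `]-K, f z] (tail h (fun w => f (X w))).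

Section TailIntegral.
Variables (f : R -> R) (K : R).
Hypotheses (fnd : nondecreasing_on_0M f)
  (fK : forall x, 0 <= x -> x <= M -> `|f x| <= K).

Let fXK w : - K <= f (X w) <= K.
Proof. by case/andP: (XM w) => w0 wM; rewrite -ler_norml fK. Qed.

Lemma tail_integral0 : tail_integral f K 0 = f 0 + K.
Proof.
have /andP[K0l _] : - K <= f 0 <= K by rewrite -ler_norml fK.
rewrite /tail_integral (Rintegral_distorted_tail_cst hd
  (measurable_superlevel_comp fnd) K0l (c := 1)) ?mul1r ?opprK // => y _ y0.
apply: distorted_tail_eq1 => // w; case/andP: (XM w) => w0 wM.
exact: le_trans y0 (fnd (lexx _) w0 wM).
Qed.

Lemma choquet_tail_integral :
  choquet P h (fun w => f (X w)) = tail_integral f K M - K.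
Proof.
have /andP[KMl KMr] : - K <= f M <= K by rewrite -ler_norml fK.
have mfX := measurable_superlevel_comp fnd.
rewrite (choquet_bounded P hd mfX _ fXK); last by rewrite (le_trans _ (fK (lexx _) M0)).
congr (_ - _); apply/eqP; rewrite -subr_eq0; apply/eqP.
rewrite /tail_integral (Rintegral_itvB _ (x := f M)) ?bnd_simp //; last first.
  exact: (distorted_tail_integrable_itv P hd mfX false false).
rewrite (Rintegral_distorted_tail_cst hd mfX KMr (c := 0)) ?mul0r // => y fMy _.
apply: distorted_tail_eq0 => // w; case/andP: (XM w) => w0 wM.
exact: le_lt_trans (fnd w0 wM (lexx _)) fMy.
Qed.

Lemma tail_integral_increment z z' : 0 <= z -> z <= z' -> z' <= M ->
  tail h X z' * (f z' - f z) <= tail_integral f K z' - tail_integral f K z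
    <= tail h X z * (f z' - f z).
Proof.
move=> z0 zz' z'M; have zM := le_trans zz' z'M.
have /andP[Kz _] : - K <= f z <= K by rewrite -ler_norml fK.
have mfX := measurable_superlevel_comp fnd.
have mX' : forall y, measurable [set w | y <= X w].
  exact: (@measurable_superlevel_comp id).
rewrite /tail_integral Rintegral_itvB ?bnd_simp ?(fnd z0 zz' z'M) //; last first.
  exact: (distorted_tail_integrable_itv P hd mfX false false).
apply: (Rintegral_distorted_tail_bounds hd mfX (fnd z0 zz' z'M)) => y fzy yfz'.
apply/andP; split; apply: (le_distorted_tail P hd) => // w /=;
  case/andP: (XM w) => w0 wM.
- by move=> z'w; apply: le_trans yfz' (fnd (le_trans z0 zz') z'w wM).
- move=> yw; rewrite leNgt; apply/negP => wz.
  by have := lt_le_trans fzy (le_trans yw (fnd w0 (ltW wz) zM)); rewrite ltxx.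
Qed.

End TailIntegral.

Lemma choquet_add_comonotone f1 f2 :
  nondecreasing_on_0M f1 -> nondecreasing_on_0M f2 ->
  (forall x y, 0 <= x -> x <= y -> y <= M -> f1 y + f2 y - (f1 x + f2 x) <= y - x) ->
  choquet P h (fun w => f1 (X w)) + choquet P h (fun w => f2 (X w)) =
  choquet P h (fun w => f1 (X w) + f2 (X w)).
Proof.
move=> nd1 nd2 lip; pose f3 x := f1 x + f2 x.
have nd3 : nondecreasing_on_0M f3.
  by move=> x y x0 xy yM; apply: lerD; [apply: nd1|apply: nd2].
pose K := `|f1 0| + `|f1 M| + (`|f2 0| + `|f2 M|).
have b1 x : 0 <= x -> x <= M -> `|f1 x| <= K.
  move=> x0 xM; apply: le_trans (nondecreasing_on_0M_norm_le nd1 x0 xM) _.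
  by rewrite lerDl addr_ge0.
have b2 x : 0 <= x -> x <= M -> `|f2 x| <= K.
  move=> x0 xM; apply: le_trans (nondecreasing_on_0M_norm_le nd2 x0 xM) _.
  by rewrite lerDr addr_ge0.
have b3 x : 0 <= x -> x <= M -> `|f3 x| <= K.
  move=> x0 xM; apply: le_trans (ler_normD _ _) _.
  by rewrite lerD // (nondecreasing_on_0M_norm_le nd1, nondecreasing_on_0M_norm_le nd2).
rewrite (choquet_tail_integral nd1 b1) (choquet_tail_integral nd2 b2).
rewrite -[fun w => _ + _]/(fun w => f3 (X w)) (choquet_tail_integral nd3 b3).
pose E z := tail_integral f1 K z + tail_integral f2 K z - tail_integral f3 K z.
have E0 : E 0 = K by rewrite /E !tail_integral0 // /f3; ring.
suff : E M = E 0 by rewrite E0 /E; lra.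
apply: (small_increments_endpoints_eq (S := tail h X) M0).
move=> z z' z0 zz' z'M.
have SX : tail h X z' <= tail h X z.
  apply: (distorted_tail_nonincreasing P hd) zz'.
  exact: (@measurable_superlevel_comp id).
have := tail_integral_increment nd1 b1 z0 zz' z'M.
have := tail_integral_increment nd2 b2 z0 zz' z'M.
have := tail_integral_increment nd3 b3 z0 zz' z'M.
have := lip z z' z0 zz' z'M.
have := nd1 z z' z0 zz' z'M; have := nd2 z z' z0 zz' z'M.
rewrite /E /f3 ler_norml => *; apply/andP; split; nra.
Qed.

End Distortion.

End ComonotoneAdditivity.

Section Indemnities.
Context (R : realType) (d : measure_display) (T : measurableType d)
  (P : probability T R) (X : T -> R) (M : R) (Tf : R -> R).
Hypotheses (mX : measurable_fun setT X) (M0 : 0 <= M)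
  (XM : forall w, 0 <= X w <= M) (hT : distortion Tf).

Lemma IL0 : IL M (fun=> 0).
Proof.
by split => // [x _|x1 x2 _ x21 _]; rewrite ?lexx // subrr lexx subr_ge0.
Qed.

Lemma IL_nondecreasing I : IL M I -> nondecreasing_on_0M M I.
Proof. by case=> _ _ IL x y x0 xy yM; case/andP: (IL y x x0 xy yM); rewrite subr_ge0. Qed.

Lemma IL_retention_nondecreasing I : IL M I -> nondecreasing_on_0M M (fun x => x - I x).
Proof.
by case=> _ _ IL x y x0 xy yM; case/andP: (IL y x x0 xy yM) => _; lra.
Qed.

Lemma choquet_retention_add I : IL M I ->
  choquet P Tf (fun w => X w - I (X w)) + choquet P Tf (fun w => I (X w)) =
  choquet P Tf X.
Proof.
move=> IL_I; rewrite (choquet_add_comonotone P mX M0 XM hT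
  (IL_retention_nondecreasing IL_I) (IL_nondecreasing IL_I)).
  by congr choquet; apply/funext => w; rewrite subrK.
by move=> x y *; rewrite !subrK.
Qed.

Lemma choquet_retention_addr I c : IL M I ->
  choquet P Tf (fun w => X w - I (X w) + c) = choquet P Tf (fun w => X w - I (X w)) + c.
Proof.
move=> IL_I; rewrite -[in RHS](choquet_cst P c hT).
rewrite (choquet_add_comonotone P mX M0 XM hT (IL_retention_nondecreasing IL_I)) //.
move=> x y x0 xy yM; case: IL_I => _ _ IL_I.
by case/andP: (IL_I y x x0 xy yM) => dI _; lra.
Qed.

Lemma rhoPol_mech_own_distortion I : IL M I -> rhoPol_mech P Tf X I Tf = choquet P Tf X.
Proof. by move=> IL_I; rewrite /rhoPol_mech choquet_retention_addr // choquet_retention_add. Qed.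

End Indemnities.

Unset Implicit Arguments.

Theorem proposition3 (R : realType) (d : measure_display) (T : measurableType d)
  (P : probability T R) (X : T -> R) (M : R) (Tf : R -> R)
  (Is : R -> R) (pis : R) :
  nonatomic P ->
  measurable_fun setT X ->
  0 < M ->
  (forall w, 0 <= X w <= M) ->
  (forall x y, 0 <= x -> x < y -> y <= M -> distr_fun P X x < distr_fun P X y) ->
  distortion Tf ->
  pareto_optimal P M Tf X Is pis ->
  rhoPol_ctr P Tf X Is pis = rhoPol_ctr P Tf X (fun _ => 0) 0 ->
  exists gs : R -> R,
    stackelberg P M Tf X Is gs /\ choquet P gs (fun w => Is (X w)) = pis.
Proof.
move=> _ mX /ltW M0 XM _ hT [IL_Is undominated] rho_Is.
have rho_null : rhoPol_ctr P Tf X (fun=> 0) 0 = choquet P Tf X.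
  by congr choquet; apply/funext => w; rewrite subr0 addr0.
have price_Is : choquet P Tf (fun w => Is (X w)) = pis.
  move: rho_Is; rewrite rho_null /rhoPol_ctr (choquet_retention_addr P mX M0 XM hT) //.
  by rewrite -(choquet_retention_add P mX M0 XM hT IL_Is); lra.
exists Tf; split; last exact: price_Is.
split; first exact: hT.
- split; first exact: IL_Is.
  by move=> I IL_I; rewrite !(rhoPol_mech_own_distortion P mX M0 XM hT).
- move=> I g hg [IL_I best_I]; rewrite leNgt; apply/negP => better.
  apply: undominated; exists I, (choquet P g (fun w => I (X w))); split.
  + exact: IL_I.
  + have := best_I _ (@IL0 _ M M0); rewrite /rhoPol_mech (choquet_cst P 0 hg).
    by rewrite rho_Is; apply.
  + by move: better; rewrite /VIn_mech /VIn_ctr price_Is => /ltW.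
  + by right; move: better; rewrite /VIn_mech /VIn_ctr price_Is.
Qed.
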